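(* Let $G$ be a proper interval graph on vertex set $[n]$, labeled so that for all $i<j$, $\{i,j\}\in E(G)$ implies the induced subgraph on $\{i,\dots,j\}$ is a clique, and let $t\ge2$, $I=I_t(G)$. Then $I$ satisfies the $\ell$-exchange property with respect to the sorting order, namely: let $u_1,\dots,u_N$ and $v_1,\dots,v_N$ be elements of $\mathcal{G}(I)$ such that $(u_i,u_j)$ and $(v_i,v_j)$ are sorted pairs for all $i<j$, and suppose that for some $q\le n-1$ one has $\deg_{x_r}(u_1\cdots u_N)=\deg_{x_r}(v_1\cdots v_N)$ for $r=1,\dots,q-1$ and $\deg_{x_q}(u_1\cdots u_N)<\deg_{x_q}(v_1\cdots v_N)$. Then there exist an index $k$ and an integer $j$ with $q<j\le n$ and $x_j\in\mathrm{supp}(u_k)$ such that $x_q u_k/x_j\in I$.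
   Context: $I_t(G)\subset K[x_1,\dots,x_n]$ is the ideal generated by all squarefree monomials $x_{i_1}\cdots x_{i_t}$ with $\{i_1,\dots,i_t\}$ an independent set of $G$; $\mathcal{G}(I)$ is its minimal monomial generating set. For monomials $u,v$ of degree $d$, write $uv=x_{i_1}\cdots x_{i_{2d}}$ with $i_1\le\cdots\le i_{2d}$, and set $\mathrm{sort}(u,v)=(x_{i_1}x_{i_3}\cdots x_{i_{2d-1}},\ x_{i_2}x_{i_4}\cdots x_{i_{2d}})$; $(u,v)$ is a sorted pair if $\mathrm{sort}(u,v)=(u,v)$. (With respect to the sorting order on $T=K[y_u:u\in\mathcal{G}(I)]$, the standard monomials of the toric ideal of $K[u:u\in\mathcal{G}(I)]$ are exactly the products $y_{u_1}\cdots y_{u_N}$ with $(u_i,u_j)$ sorted for all $i<j$, which is the form used above.) A proper interval graph is a graph whose vertices can be assigned real intervals, none properly containing another, such that two vertices are adjacent iff their intervals intersect; such a labeling of the vertices exists for every proper interval graph. *)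

From mathcomp Require Import all_boot all_order all_algebra.
Set Implicit Arguments. Unset Strict Implicit. Unset Printing Implicit Defensive.
Import Order.TTheory GRing.Theory Num.Theory.

(* Vertex x_{i+1} of [n] is represented by i : 'I_n (0-based labels). *)

Definition simple_graph (n : nat) (e : rel 'I_n) : Prop :=
  (forall i, ~~ e i i) /\ (forall i j, e i j = e j i).

Definition proper_interval_graph (n : nat) (e : rel 'I_n) : Prop :=
  exists a b : 'I_n -> rat,
    (forall i, (a i <= b i)%R) /\
    (forall i j, ~ ((a i <= a j)%R /\ (b j <= b i)%R /\ (a i != a j \/ b i != b j))) /\
    (forall i j, i != j -> (e i j <-> ((a i <= b j)%R /\ (a j <= b i)%R))).

Definition proper_interval_labeling (n : nat) (e : rel 'I_n) : Prop :=
  forall i j : 'I_n, i < j -> e i j ->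
    forall a b : 'I_n, i <= a <= j -> i <= b <= j -> a != b -> e a b.

Definition independent (n : nat) (e : rel 'I_n) (S : {set 'I_n}) : bool :=
  [forall x in S, forall y in S, ~~ e x y].

(* minimal generators of I_t(G): squarefree monomials x_S, S independent, |S| = t *)
Definition gen_It (n : nat) (e : rel 'I_n) (t : nat) (S : {set 'I_n}) : bool :=
  independent e S && (#|S| == t).

(* a monomial is an exponent vector; it lies in I_t(G) iff it is divisible
   by some generator x_S *)
Definition in_It (n : nat) (e : rel 'I_n) (t : nat) (m : 'I_n -> nat) : Prop :=
  exists S : {set 'I_n}, gen_It e t S /\ forall i, i \in S -> 0 < m i.

Definition mon_of_set (n : nat) (S : {set 'I_n}) : 'I_n -> nat :=
  fun i => nat_of_bool (i \in S).

(* monomials of degree d as multisets of variables (seq 'I_n);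
   sort(u,v): odd and even positions of the sorted product *)
Definition odd_pos (T : Type) (s : seq T) : seq T :=
  mask [seq ~~ odd i | i <- iota 0 (size s)] s.
Definition even_pos (T : Type) (s : seq T) : seq T :=
  mask [seq odd i | i <- iota 0 (size s)] s.

Definition sortm (n : nat) (u v : seq 'I_n) : seq 'I_n * seq 'I_n :=
  let s := sort (fun x y : 'I_n => (x <= y)%N) (u ++ v) in (odd_pos s, even_pos s).

(* (u,v) sorted pair: sort(u,v) = (u,v) as monomials (i.e. as multisets) *)
Definition sorted_pair (n : nat) (A B : {set 'I_n}) : bool :=
  let p := sortm (enum A) (enum B) in perm_eq p.1 (enum A) && perm_eq p.2 (enum B).

Definition deg_prod (n N : nat) (u : 'I_N -> {set 'I_n}) (r : 'I_n) : nat :=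
  \sum_(k < N) mon_of_set (u k) r.

(* The sorting order makes the factors u_1, ..., u_N interleave: reading their
   elements column by column (the smallest elements of u_1, ..., u_N, then the
   second smallest ones, ...) yields a weakly increasing sequence with the same
   multiset of entries as u_1 ... u_N, and likewise for v.  The two sequences
   contain the same entries below q, and v contains more copies of q, so at the
   position p = #{entries < q} + #{entries = q in u} the u-sequence exceeds q
   while the v-sequence equals q, and the two agree before the entries < q run
   out.  If p is the l-th element j of u_k, then the elements of u_k below j are
   also elements of v_k, which contains q, so they are not adjacent to q; an
   element y > j adjacent to q would make {q, ..., y} a clique containing j and
   y.  Hence x_q u_k / x_j is again a product of t independent variables. *)

From mathcomp Require Import all_boot all_order all_algebra.
From mathcomp Require Import zify.
Set Implicit Arguments. Unset Strict Implicit. Unset Printing Implicit Defensive.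
Import Order.TTheory.

Lemma odd_pos_cons T (x : T) s : odd_pos (x :: s) = x :: even_pos s.
Proof.
rewrite /odd_pos /even_pos /= -[1]addn0 iotaDl -map_comp.
by congr (_ :: mask _ _); apply: eq_map => i /=; rewrite negbK.
Qed.

Lemma even_pos_cons T (x : T) s : even_pos (x :: s) = odd_pos s.
Proof.
rewrite /odd_pos /even_pos /= -[1]addn0 iotaDl -map_comp.
by congr (mask _ _); apply: eq_map => i /=.
Qed.

Lemma nth_odd_even_pos T (x0 : T) s l :
  nth x0 (odd_pos s) l = nth x0 s l.*2 /\ nth x0 (even_pos s) l = nth x0 s l.*2.+1.
Proof.
elim: s l => [|x s IHs] l; first by rewrite /odd_pos /even_pos !nth_nil.
rewrite odd_pos_cons even_pos_cons; split; last exact: (IHs l).1.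
by case: l => [|l] //=; rewrite (IHs l).2.
Qed.

Lemma map_odd_pos T U (f : T -> U) s : map f (odd_pos s) = odd_pos (map f s).
Proof. by rewrite /odd_pos map_mask size_map. Qed.

Lemma map_even_pos T U (f : T -> U) s : map f (even_pos s) = even_pos (map f s).
Proof. by rewrite /even_pos map_mask size_map. Qed.

Section EnumSet.
Variable n : nat.
Implicit Types A B : {set 'I_n}.

Definition nth_elt A l := nth 0 [seq val i | i <- enum A] l.

Lemma sorted_val_enum A : sorted ltn [seq val i | i <- enum A].
Proof.
rewrite -[enum _](eq_filter (mem_enum _)) -(eq_filter (mem_map val_inj _)).
by rewrite -filter_map (sorted_filter ltn_trans) // unlock val_ord_enum iota_ltn_sorted.
Qed.

Lemma ltn_nth_elt A l1 l2 : l1 < #|A| -> l2 < #|A| ->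
  (nth_elt A l1 < nth_elt A l2) = (l1 < l2).
Proof.
move=> lt1 lt2; apply: (lt_sorted_ltn_nth 0 (sorted_val_enum A));
  by rewrite inE size_map -cardE.
Qed.

Lemma nth_elt_val A (x0 : 'I_n) l : l < #|A| -> nth_elt A l = val (nth x0 (enum A) l).
Proof. by move=> lt_lA; rewrite /nth_elt (nth_map x0) -?cardE. Qed.

Lemma nth_elt_index A y : y \in A ->
  index y (enum A) < #|A| /\ nth_elt A (index y (enum A)) = val y.
Proof.
rewrite -mem_enum => yA; have lt_yA : index y (enum A) < #|A| by rewrite cardE index_mem.
by rewrite (nth_elt_val y) // nth_index.
Qed.

Lemma mem_nth_elt A y l : l < #|A| -> nth_elt A l = val y -> y \in A.
Proof.
move=> lt_lA; rewrite (nth_elt_val y) // => /val_inj <-.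
by rewrite -mem_enum mem_nth -?cardE.
Qed.

Lemma mem_common_prefix A B l y :
  #|A| = #|B| -> l < #|A| ->
  (forall m, m < l -> nth_elt A m = nth_elt B m) ->
  y \in A -> val y < nth_elt A l -> y \in B /\ val y < nth_elt B l.
Proof.
move=> cardAB lt_lA prefix yA; have [lt_yA nth_y] := nth_elt_index yA.
move=> lt_y_l; have lt_yl : index y (enum A) < l by rewrite -(ltn_nth_elt lt_yA lt_lA) nth_y.
rewrite prefix // in nth_y; rewrite cardAB in lt_yA lt_lA.
by rewrite -nth_y ltn_nth_elt // (mem_nth_elt lt_yA).
Qed.

Lemma sorted_pair_interleave A B t l : sorted_pair A B -> #|A| = t -> #|B| = t -> l < t ->
  nth_elt A l <= nth_elt B l /\ (l.+1 < t -> nth_elt B l <= nth_elt A l.+1).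
Proof.
rewrite /sorted_pair /sortm /=; set s := sort _ _.
move=> /andP[permA permB] cardA cardB lt_lt.
have le_tr : transitive (fun x y : 'I_n => x <= y) by move=> ? ? ?; apply: leq_trans.
have le_anti : antisymmetric (fun x y : 'I_n => x <= y) by move=> ? ? /anti_leq/val_inj.
have sorted_s : sorted (fun x y : 'I_n => x <= y) s.
  by apply/sort_sorted => x y; apply: leq_total.
have sorted_enum (C : {set 'I_n}) : sorted (fun x y : 'I_n => x <= y) (enum C).
  by have := sorted_val_enum C; rewrite sorted_map; apply: sub_sorted => x y /ltnW.
have sorted_mask m : sorted (fun x y : 'I_n => x <= y) (mask m s).
  exact: (subseq_sorted le_tr (mask_subseq m s)).
have oddA : odd_pos s = enum A by apply: (sorted_eq le_tr le_anti); rewrite ?sorted_mask.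
have evenB : even_pos s = enum B by apply: (sorted_eq le_tr le_anti); rewrite ?sorted_mask.
have nth_vals m :
    nth_elt A m = nth 0 (map val s) m.*2 /\ nth_elt B m = nth 0 (map val s) m.*2.+1.
  by rewrite /nth_elt -oddA -evenB map_odd_pos map_even_pos; apply: nth_odd_even_pos.
have size_s : size (map val s) = t.*2.
  by rewrite size_map size_sort size_cat -!cardE cardA cardB addnn.
have sorted_vals : sorted leq (map val s) by rewrite sorted_map.
have mono_vals := sorted_leq_nth leq_trans leqnn 0 sorted_vals.
split=> [|lt_l1t]; rewrite (nth_vals l).2 ?(nth_vals l).1 ?(nth_vals l.+1).1.
  by apply: mono_vals; rewrite ?inE ?size_s //; lia.
by apply: mono_vals; rewrite ?inE ?size_s //; lia.
Qed.
End EnumSet.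

Lemma count_leq_split (s : seq nat) q :
  count (fun x => x <= q) s = count (fun x => x < q) s + count_mem q s.
Proof. by elim: s => //= x s ->; rewrite leq_eqVlt; case: ltngtP; lia. Qed.

Section SortedExcess.
Variables (s s' : seq nat) (q : nat).
Hypotheses (sorted_s : sorted leq s) (sorted_s' : sorted leq s')
  (size_s : size s = size s')
  (count_below : forall x, x < q -> count_mem x s = count_mem x s')
  (count_q : count_mem q s < count_mem q s').

Let c := count (fun x => x < q) s.
Let p := c + count_mem q s.

Lemma filter_below_eq : [seq x <- s | x < q] = [seq x <- s' | x < q].
Proof.
apply: (sorted_eq leq_trans anti_leq); rewrite ?sorted_filter //; try exact: leq_trans.
apply/allP => x _ /=; rewrite !count_filter.
case: (ltnP x q) => [lt_xq | le_qx].
  by rewrite !(@eq_count _ _ (pred1 x)) ?count_below // => y /=;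
    case: eqP => // ->; rewrite lt_xq.
by rewrite !(@eq_count _ _ pred0) ?count_pred0 // => y /=;
  case: eqP => // ->; rewrite ltnNge le_qx.
Qed.

Lemma count_below_eq : count (fun x => x < q) s' = c.
Proof. by rewrite /c -!size_filter filter_below_eq. Qed.

Lemma excess_lt_size : p < size s.
Proof.
rewrite size_s; apply: leq_trans (count_size (fun x => x <= q) s').
by rewrite count_leq_split count_below_eq ltn_add2l.
Qed.

Lemma excess_nth_gt : q < nth 0 s p.
Proof.
apply: (@nth_count_ge _ _ q.+1); first exact: sorted_s.
by rewrite excess_lt_size andbT /p /c -count_leq_split.
Qed.

Lemma excess_nth_eq : nth 0 s' p = q.
Proof.
apply/anti_leq/andP; split.
  apply: (@nth_count_le _ _ q) => //.
  by rewrite count_leq_split count_below_eq ltn_add2l.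
apply: (@nth_count_ge _ _ q) => //.
by rewrite count_below_eq leq_addr -size_s excess_lt_size.
Qed.

Lemma excess_prefix_eq i : i < c -> nth 0 s i = nth 0 s' i.
Proof.
move=> lt_ic; rewrite -(nth_take _ lt_ic) -[in RHS](nth_take _ lt_ic).
by rewrite -{2}count_below_eq -!sorted_filter_lt // filter_below_eq.
Qed.

End SortedExcess.

Lemma count_nth_sum (s : seq nat) (a : pred nat) :
  count a s = \sum_(0 <= i < size s) a (nth 0 s i).
Proof. by rewrite -sum1_count big_mkcond (big_nth 0). Qed.

Section Columns.
Variables (n N t : nat) (w : 'I_N.+1 -> {set 'I_n}).
Hypothesis card_w : forall k, #|w k| = t.

Definition colseq : seq nat :=
  mkseq (fun p => nth_elt (w (inord (p %% N.+1))) (p %/ N.+1)) (t * N.+1).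

Lemma size_colseq : size colseq = t * N.+1.
Proof. exact: size_mkseq. Qed.

Lemma nth_colseq (k : 'I_N.+1) l : l < t -> nth 0 colseq (l * N.+1 + k) = nth_elt (w k) l.
Proof.
move=> lt_lt; rewrite nth_mkseq; last by have := ltn_ord k; nia.
by rewrite modnMDl divnMDl // modn_small // divn_small // addn0 inord_val.
Qed.

Lemma count_colseq (r : 'I_n) : count_mem (val r) colseq = deg_prod w r.
Proof.
rewrite count_nth_sum size_colseq big_nat_mul.
under eq_big_nat => l /andP[_ lt_lt].
  rewrite -[l * _]add0n big_addn mulSn addnK big_mkord.
  under eq_bigr => k _ do rewrite addnC nth_colseq //.
  over.
rewrite exchange_big; apply: eq_bigr => k _ /=.
rewrite /mon_of_set -mem_enum -(mem_map val_inj) -count_uniq_mem.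
  by rewrite count_nth_sum size_map -cardE card_w.
by rewrite (map_inj_uniq val_inj) enum_uniq.
Qed.

Lemma colseq_sorted : (forall i j : 'I_N.+1, i < j -> sorted_pair (w i) (w j)) ->
  sorted leq colseq.
Proof.
move=> sorted_w; apply/(sortedP 0) => p; rewrite size_colseq => lt_p1.
have lt_pN : p %% N.+1 < N.+1 by rewrite ltn_mod.
have lt_lt : p %/ N.+1 < t by rewrite ltn_divLR //; lia.
rewrite [p in nth 0 _ p](divn_eq p N.+1) -[p %% N.+1]/(val (Ordinal lt_pN)) nth_colseq //.
case: (ltnP (p %% N.+1) N) => [lt_kN | ge_kN].
  have lt_k1 : (p %% N.+1).+1 < N.+1 by [].
  have -> : p.+1 = p %/ N.+1 * N.+1 + Ordinal lt_k1 by rewrite /= addnS -divn_eq.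
  rewrite nth_colseq //.
  have sorted_k := sorted_w (Ordinal lt_pN) (Ordinal lt_k1) (ltnSn _).
  by have [] := sorted_pair_interleave sorted_k (card_w _) (card_w _) lt_lt.
have k_max : p %% N.+1 = N by lia.
have lt_l1t : (p %/ N.+1).+1 < t.
  by move: lt_p1; rewrite {1}(divn_eq p N.+1) k_max; nia.
have -> : p.+1 = (p %/ N.+1).+1 * N.+1 + @ord0 N.
  by rewrite /= addn0 mulSn addnC {1}(divn_eq p N.+1) k_max addnS.
rewrite nth_colseq //; have {1}-> : Ordinal lt_pN = ord_max by apply: val_inj.
case: (posnP N) => [N0 | N_gt0].
  have -> : @ord0 N = ord_max by apply: val_inj; rewrite /= N0.
  by rewrite ltnW // ltn_nth_elt ?card_w.
have sorted_0N := sorted_w ord0 ord_max N_gt0.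
by have [_ ->] := sorted_pair_interleave sorted_0N (card_w _) (card_w _) (ltnW lt_l1t).
Qed.
End Columns.

Lemma deg_prod_le n N (w : 'I_N -> {set 'I_n}) r : deg_prod w r <= N.
Proof.
rewrite -[N in _ <= N]card_ord -sum1_card.
by apply: leq_sum => k _; rewrite /mon_of_set; case: (_ \in _).
Qed.

Lemma colseq_first_excess n N t (u v : 'I_N.+1 -> {set 'I_n}) (q : 'I_n) :
  (forall k, #|u k| = t) -> (forall k, #|v k| = t) ->
  (forall i j : 'I_N.+1, i < j -> sorted_pair (u i) (u j)) ->
  (forall i j : 'I_N.+1, i < j -> sorted_pair (v i) (v j)) ->
  (forall r : 'I_n, r < q -> deg_prod u r = deg_prod v r) ->
  deg_prod u q < deg_prod v q ->
  exists (k : 'I_N.+1) (l : nat), [/\ l < t, q < nth_elt (u k) l, nth_elt (v k) l = q &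
    forall m, m < l -> nth_elt (u k) m = nth_elt (v k) m].
Proof.
move=> card_u card_v sorted_u sorted_v deg_below deg_q.
have count_below x : x < q -> count_mem x (colseq t u) = count_mem x (colseq t v).
  move=> lt_xq; have lt_xn : x < n := ltn_trans lt_xq (ltn_ord q).
  by rewrite -[x]/(val (Ordinal lt_xn)) !count_colseq // deg_below.
have count_q : count_mem (val q) (colseq t u) < count_mem (val q) (colseq t v).
  by rewrite !count_colseq.
have [su sv] := (colseq_sorted card_u sorted_u, colseq_sorted card_v sorted_v).
have size_uv : size (colseq t u) = size (colseq t v) by rewrite !size_colseq.
have count_q_small : count_mem (val q) (colseq t u) < N.+1.
  by rewrite count_colseq //; apply: leq_trans deg_q (deg_prod_le _ _).
have := excess_prefix_eq su sv count_below.
have := excess_nth_eq su sv size_uv count_below count_q.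
have := excess_nth_gt su sv size_uv count_below count_q.
have := excess_lt_size su sv size_uv count_below count_q.
set p := _ + _; rewrite size_colseq => lt_p gt_p eq_p prefix.
have lt_kN : p %% N.+1 < N.+1 by rewrite ltn_mod.
have p_split : p = p %/ N.+1 * N.+1 + Ordinal lt_kN by rewrite /= -divn_eq.
have lt_lt : p %/ N.+1 < t by rewrite ltn_divLR.
exists (Ordinal lt_kN), (p %/ N.+1).
rewrite -!(@nth_colseq _ _ t) // -p_split; split=> // m lt_ml.
rewrite -!(@nth_colseq _ _ t) ?(ltn_trans lt_ml) //; apply: prefix.
have := leq_mul lt_ml (leqnn N.+1); rewrite mulSn.
move: p_split count_q_small; rewrite /p /=; lia.
Qed.

Lemma independentP n (e : rel 'I_n) (S : {set 'I_n}) :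
  reflect (forall x y, x \in S -> y \in S -> ~~ e x y) (independent e S).
Proof.
apply: (iffP forallP) => [ind x y xS yS | ind x].
  by have /implyP/(_ xS)/forallP/(_ y)/implyP/(_ yS) := ind x.
by apply/implyP => xS; apply/forallP => y; apply/implyP; apply: ind.
Qed.

Lemma independent_exchange n (e : rel 'I_n) (U : {set 'I_n}) (q j : 'I_n) :
  simple_graph e -> proper_interval_labeling e -> independent e U ->
  j \in U -> q < j -> (forall y, y \in U -> y < j -> ~~ e q y) ->
  independent e (q |: U :\ j).
Proof.
move=> [irr sym] lab /independentP indU jU lt_qj below.
have nadj_q y : y \in U -> y != j -> ~~ e q y.
  move=> yU ne_yj; case: (ltngtP y j) => [/(below y yU) // | lt_jy | /val_inj eq_yj].
    apply/negP => e_qy; have lt_qy := ltn_trans lt_qj lt_jy.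
    have e_jy : e j y.
      apply: (lab q y lt_qy e_qy); last by rewrite neq_ltn lt_jy.
        by rewrite (ltnW lt_qj) (ltnW lt_jy).
      by rewrite (ltnW lt_qy) leqnn.
    by move: (indU j y jU yU); rewrite e_jy.
  by rewrite eq_yj eqxx in ne_yj.
apply/independentP => x y; rewrite !in_setU1 !in_setD1.
case/predU1P=> [-> | /andP[ne_xj xU]]; case/predU1P=> [-> | /andP[ne_yj yU]].
- exact: irr.
- exact: nadj_q.
- by rewrite sym; apply: nadj_q.
- exact: indU.
Qed.

Lemma in_It_exchange n (e : rel 'I_n) t (U : {set 'I_n}) (q j : 'I_n) :
  gen_It e t U -> q \notin U -> j \in U -> independent e (q |: U :\ j) ->
  in_It e t (fun i => mon_of_set U i + nat_of_bool (i == q) - nat_of_bool (i == j)).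
Proof.
case/andP=> _ /eqP card_U qU jU ind; exists (q |: U :\ j); split.
  rewrite /gen_It ind -card_U; apply/eqP.
  by rewrite cardsU1 in_setD1 (negbTE qU) andbF [#|U|](cardsD1 j) jU.
have ne_qj : q != j by apply: contraNneq qU => ->.
move=> i; rewrite /mon_of_set in_setU1 in_setD1 => /predU1P[-> | /andP[ne_ij iU]].
  by rewrite (negbTE qU) eqxx (negbTE ne_qj).
by rewrite iU (negbTE ne_ij) subn0 addn_gt0.
Qed.

Theorem proposition2p4 (n : nat) (e : rel 'I_n) (t : nat)
  (He : simple_graph e) (Hpig : proper_interval_graph e)
  (Hlab : proper_interval_labeling e) (Ht : 2 <= t)
  (N : nat) (u v : 'I_N -> {set 'I_n})
  (Hu : forall k, gen_It e t (u k)) (Hv : forall k, gen_It e t (v k))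
  (Husort : forall i j : 'I_N, i < j -> sorted_pair (u i) (u j))
  (Hvsort : forall i j : 'I_N, i < j -> sorted_pair (v i) (v j))
  (q : 'I_n) (Hq : q.+2 <= n)
  (Heq : forall r : 'I_n, r < q -> deg_prod u r = deg_prod v r)
  (Hlt : deg_prod u q < deg_prod v q) :
  exists (k : 'I_N) (j : 'I_n), q < j /\ j \in u k /\
    in_It e t (fun i => mon_of_set (u k) i + nat_of_bool (i == q) - nat_of_bool (i == j)).
Proof.
case: N u v Hu Hv Husort Hvsort Heq Hlt => [|N] u v Hu Hv Husort Hvsort Heq Hlt.
  by rewrite /deg_prod !big_ord0 in Hlt.
have card_u k : #|u k| = t by case/andP: (Hu k) => _ /eqP.
have card_v k : #|v k| = t by case/andP: (Hv k) => _ /eqP.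
have [K [l [lt_lt lt_q_ul vl_q prefix]]] :=
  colseq_first_excess card_u card_v Husort Hvsort Heq Hlt.
set j := nth q (enum (u K)) l.
have ul_j : nth_elt (u K) l = j by apply: nth_elt_val; rewrite card_u.
have jU : j \in u K by apply: (mem_nth_elt _ ul_j); rewrite card_u.
have qV : q \in v K by apply: (mem_nth_elt _ vl_q); rewrite card_v.
have below y : y \in u K -> y < j -> y \in v K /\ y < q.
  by rewrite -ul_j -vl_q => yU; apply: mem_common_prefix; rewrite ?card_u ?card_v.
have lt_qj : q < j by rewrite -ul_j.
have qU : q \notin u K by apply/negP => /below/(_ lt_qj)[_]; rewrite ltnn.
exists K, j; split=> //; split=> //; apply: in_It_exchange => //.
apply: independent_exchange => //; first by case/andP: (Hu K).
move=> y yU /(below y yU)[yV _].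
by case/andP: (Hv K) => /independentP indV _; apply: indV.
Qed.
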